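(* Let $C$ be a square in the plane. For a point $p\in C$, let $D_p$ be the set of points of the plane that are closer to $p$ than to any point of the boundary $\partial C$, and let $f(p)=\operatorname{area}(D_p)/\operatorname{area}(C)$. If $p$ is a point chosen uniformly at random from $C$, then $\Pr[f(p)\ge 1/15]\ge 1/15$.
   Context: Distances are Euclidean. *)

From HB Require Import structures.
From mathcomp Require Import all_boot all_order all_algebra.
From mathcomp Require Import all_classical all_reals all_analysis.
Set Implicit Arguments. Unset Strict Implicit. Unset Printing Implicit Defensive.
Import Order.TTheory GRing.Theory Num.Theory.
Import numFieldNormedType.Exports.
Local Open Scope classical_set_scope.
Local Open Scope ring_scope.

Section Defs.
Variable R : realType.

(* A square in the plane R^2 = R*R: center c, half side-length h > 0,
   rotation angle t; local coordinates (a,b) with |a|,|b| <= h. *)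
Definition sqpt (c : R * R) (t a b : R) : R * R :=
  (c.1 + a * cos t - b * sin t, c.2 + a * sin t + b * cos t).

Definition square (c : R * R) (h t : R) : set (R * R) :=
  [set x | exists a b, `|a| <= h /\ `|b| <= h /\ x = sqpt c t a b].

Definition square_bd (c : R * R) (h t : R) : set (R * R) :=
  [set x | exists a b, Num.max `|a| `|b| = h /\ x = sqpt c t a b].

Definition edist (x y : R * R) : R :=
  Num.sqrt ((x.1 - y.1) ^+ 2 + (x.2 - y.2) ^+ 2).

Definition Dreg (c : R * R) (h t : R) (p : R * R) : set (R * R) :=
  [set x | forall q, square_bd c h t q -> edist x p < edist x q].

Definition area (A : set (R * R)) : \bar R :=
  ((@lebesgue_measure R) \x (@lebesgue_measure R))%E A.

Definition fratio (c : R * R) (h t : R) (p : R * R) : \bar R :=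
  (area (Dreg c h t p) * (area (square c h t))^-1)%E.

End Defs.

From Pilot Require Import Defs.
From HB Require Import structures.
From mathcomp Require Import all_boot all_order all_algebra.
From mathcomp Require Import all_classical all_reals all_analysis.
From mathcomp Require Import measurable_realfun ring lra.
Import Order.TTheory GRing.Theory Num.Theory.
Local Open Scope classical_set_scope.
Local Open Scope ring_scope.

(* Put s = 4/15 and let S be the square concentric with C, of side s times
   that of C.  For p in S, the translate of S centred at p lies in D_p: its
   points have local coordinates of size at most 2 s h (h the half-side of C),
   so they are within sqrt 2 s h of p but at distance at least (1 - 2 s) h
   from the boundary, and 2 s^2 < (1 - 2 s)^2.  A homothety of ratio k scales
   area by k^2, so S and its translates have area s^2 area(C); hence f >= s^2
   on S, and Pr[f >= 1/15] >= area(S)/area(C) = s^2 = 16/225 >= 1/15. *)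

Section monotone_area.
Context {R : realType}.
Local Open Scope ereal_scope.

Lemma le_lebesgue_measure :
  {homo @lebesgue_measure R : A B / A `<=` B >-> A <= B}.
Proof.
move=> A B AB; rewrite /lebesgue_measure /lebesgue_stieltjes_measure /measure_extension.
exact: le_outer_measure.
Qed.

Lemma ge0_le_integralT d (T : measurableType d) (mu : {measure set T -> \bar R})
    (f g : T -> \bar R) :
  (forall x, 0 <= f x) -> (forall x, f x <= g x) ->
  \int[mu]_x f x <= \int[mu]_x g x.
Proof.
move=> f0 fg; have g0 x : 0 <= g x by exact: le_trans (f0 x) (fg x).
rewrite !ge0_integralTE //; apply: ereal_sup_le => _ [u uf <-].
by exists u => // x; exact: le_trans (uf x) (fg x).
Qed.

(* Needed on arbitrary sets: D_p is never shown to be measurable. *)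
Lemma le_area {A B : set (R * R)} : A `<=` B -> area A <= area B.
Proof.
move=> AB; apply: ge0_le_integralT => x; first exact: measure_ge0.
by apply: le_lebesgue_measure => y; rewrite /xsection /= !inE => /AB.
Qed.

End monotone_area.

Section square_coordinates.
Context {R : realType}.
Implicit Types (c p x y : R * R) (a b h t : R).

Definition sqcoord c t x : R * R :=
  ((x.1 - c.1) * cos t + (x.2 - c.2) * sin t,
   (x.2 - c.2) * cos t - (x.1 - c.1) * sin t).

Lemma sqcoordK c t a b : sqcoord c t (sqpt c t a b) = (a, b).
Proof.
by rewrite /sqcoord /sqpt /=; congr (_, _); rewrite -[RHS]mulr1 -(cos2Dsin2 t); ring.
Qed.

Lemma sqptK c t x : sqpt c t (sqcoord c t x).1 (sqcoord c t x).2 = x.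
Proof.
case: x => x1 x2; rewrite /sqcoord /sqpt /=; congr (_, _).
- transitivity (x1 + (x1 - c.1) * (cos t ^+ 2 + sin t ^+ 2 - 1)); first by ring.
  by rewrite cos2Dsin2 subrr mulr0 addr0.
- transitivity (x2 + (x2 - c.2) * (cos t ^+ 2 + sin t ^+ 2 - 1)); first by ring.
  by rewrite cos2Dsin2 subrr mulr0 addr0.
Qed.

Lemma squareP c h t x :
  square c h t x <-> `|(sqcoord c t x).1| <= h /\ `|(sqcoord c t x).2| <= h.
Proof.
split=> [[a [b [ha [hb ->]]]] | [ha hb]]; first by rewrite sqcoordK.
by exists (sqcoord c t x).1, (sqcoord c t x).2; rewrite sqptK.
Qed.

Lemma squareE c h t : square c h t = sqcoord c t @^-1` (`[-h, h] `*` `[-h, h]).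
Proof.
apply/seteqP; split => x; rewrite /preimage /= !in_itv /= -!ler_norml.
  by move=> /squareP.
by move=> ?; apply/squareP.
Qed.

Lemma le_square c t h1 h2 : h1 <= h2 -> square c h1 t `<=` square c h2 t.
Proof.
by move=> h12 x /squareP[x1 x2]; apply/squareP; split; apply: le_trans h12.
Qed.

Lemma sqcoord_shift c p t x :
  sqcoord p t x = ((sqcoord c t x).1 - (sqcoord c t p).1,
                   (sqcoord c t x).2 - (sqcoord c t p).2).
Proof. by rewrite /sqcoord /=; congr (_, _); ring. Qed.

(* [Defs.edist] is qualified because all_analysis also exports an [edist]. *)
Lemma edist_sqcoord c t x y :
  Defs.edist x y = Defs.edist (sqcoord c t x) (sqcoord c t y).
Proof.
rewrite /Defs.edist /sqcoord /=; congr Num.sqrt.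
transitivity (((x.1 - y.1) ^+ 2 + (x.2 - y.2) ^+ 2) * (cos t ^+ 2 + sin t ^+ 2)).
  by rewrite cos2Dsin2 mulr1.
by ring.
Qed.

End square_coordinates.

Section Dreg_contains_square.
Context {R : realType}.

Lemma sqr_le_norm {x m : R} : `|x| <= m -> x ^+ 2 <= m ^+ 2.
Proof.
move=> xm; rewrite -real_normK ?num_real //.
by apply: lerXn2r; rewrite // nnegrE (le_trans _ xm).
Qed.

Lemma sqr_coord_gap (x q m : R) :
  `|x| <= m <= `|q| -> (`|q| - m) ^+ 2 <= (x - q) ^+ 2.
Proof.
move=> /andP[xm mq]; rewrite -[(x - q) ^+ 2]real_normK ?num_real // distrC.
have gap : `|q| - m <= `|q - x| by apply: le_trans _ (lerB_dist q x); lra.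
have : 0 <= `|q| - m by rewrite subr_ge0.
nra.
Qed.

Lemma square_sub_Dreg (c p : R * R) h t s :
  0 < h -> 2 * s <= 1 -> 2 * s ^+ 2 < (1 - 2 * s) ^+ 2 ->
  square c (s * h) t p -> square p (s * h) t `<=` Dreg c h t p.
Proof.
move=> h0 s_half s_small /squareP[+ +] x /squareP[] + + _ [a [b [ab ->]]].
rewrite (sqcoord_shift c p) (edist_sqcoord c t x) (edist_sqcoord c t x) sqcoordK.
move: (sqcoord c t x) (sqcoord c t p) => u v p1 p2 /= xp1 xp2.
rewrite /Defs.edist /=.
have near : (u.1 - v.1) ^+ 2 + (u.2 - v.2) ^+ 2 <= 2 * (s * h) ^+ 2.
  by have := sqr_le_norm xp1; have := sqr_le_norm xp2; lra.
have u1 : `|u.1| <= 2 * s * h.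
  by have := ler_normD (u.1 - v.1) v.1; rewrite subrK; lra.
have u2 : `|u.2| <= 2 * s * h.
  by have := ler_normD (u.2 - v.2) v.2; rewrite subrK; lra.
have sh : 2 * s * h <= h by nra.
have far : ((1 - 2 * s) * h) ^+ 2 <= (u.1 - a) ^+ 2 + (u.2 - b) ^+ 2.
  have [a_edge | b_edge] : `|a| = h \/ `|b| = h.
    by move: ab; case: (leP `|a| `|b|) => _ ->; [right | left].
  - have := sqr_coord_gap u.1 a (2 * s * h); rewrite a_edge u1 sh => /(_ isT).
    by have := sqr_ge0 (u.2 - b); nra.
  - have := sqr_coord_gap u.2 b (2 * s * h); rewrite b_edge u2 sh => /(_ isT).
    by have := sqr_ge0 (u.1 - a); nra.
have sep : 2 * (s * h) ^+ 2 < ((1 - 2 * s) * h) ^+ 2.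
  by rewrite !exprMn mulrA ltr_pM2r // exprn_gt0.
rewrite ltr_sqrt; first lra.
by apply: lt_le_trans far; apply: le_lt_trans sep; rewrite mulr_ge0 ?sqr_ge0.
Qed.

End Dreg_contains_square.

Section homothety.
Context {R : realType}.
Local Notation mu := (@lebesgue_measure R).
Implicit Types (r p q a b : R).

(* The library's measure instance on [pushforward m f] takes the
   measurability of [f] as an argument, so it cannot be inferred. *)
Local Notation pushforward_measure :=
  measure_function_pushforward__canonical__measure_function_Measure.

Definition homothety r p q (y : R) : R := q + r * (y - p).

Lemma measurable_homothety r p q : measurable_fun setT (homothety r p q).
Proof.
apply: measurable_funD => //; apply: measurable_funM => //.
exact: measurable_funB.
Qed.

Lemma homothety_preimage_itv r p q a b : 0 < r ->
  homothety r p q @^-1` `]a, b]%classic = `]p + (a - q) / r, p + (b - q) / r]%classic.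
Proof.
move=> r0; have lt_iff x y : (x < q + r * (y - p)) = (p + (x - q) / r < y).
  by rewrite -[in LHS]ltrBlDl -[in RHS]ltrBrDl ltr_pdivrMr // mulrC.
have le_iff x y : (q + r * (y - p) <= x) = (y <= p + (x - q) / r).
  by rewrite -[in LHS]lerBrDl -[in RHS]lerBlDl ler_pdivlMr // mulrC.
by apply/seteqP; split => y; rewrite /= !in_itv /= lt_iff le_iff.
Qed.

Lemma lebesgue_measure_homothety r p q A : 0 < r -> measurable A ->
  (mu (homothety r p q @^-1` A) = (r^-1)%:E * mu A)%E.
Proof.
move=> r0 mA.
have mh : measurable_fun (T := measurableTypeR R) (U := measurableTypeR R)
  setT (homothety r p q) := measurable_homothety r p q.
pose nu := pushforward_measure mu mh.
have -> := @lebesgue_measure_unique R (mscale (NngNum (ltW r0)) nu) _ A mA.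
  change (mu (homothety r p q @^-1` A) =
    (r^-1)%:E * (r%:E * mu (homothety r p q @^-1` A)))%E.
  by rewrite muleA -EFinM mulVf ?gt_eqF // mul1e.
move=> _ [[a b] _ <-].
change (mu `]a, b] = r%:E * mu (homothety r p q @^-1` `]a, b]))%E.
rewrite homothety_preimage_itv //.
rewrite !lebesgue_measure_itv /= !lte_fin ltrD2l ltr_pM2r ?invr_gt0 // ltrD2r.
case: ifP => _; last by rewrite mule0.
by rewrite -EFinM; congr (_%:E); field; rewrite gt_eqF.
Qed.

Definition homothety2 r (p q : R * R) (y : R * R) : R * R :=
  (homothety r p.1 q.1 y.1, homothety r p.2 q.2 y.2).

Lemma measurable_homothety2 r (p q : R * R) :
  measurable_fun (T := (measurableTypeR R * measurableTypeR R)%type)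
    (U := (measurableTypeR R * measurableTypeR R)%type) setT (homothety2 r p q).
Proof.
apply: measurable_fun_pair.
  exact: measurableT_comp (measurable_homothety _ _ _) measurable_fst.
exact: measurableT_comp (measurable_homothety _ _ _) measurable_snd.
Qed.

Lemma area_homothety2 r (p q : R * R) (X : set (measurableTypeR R * measurableTypeR R)) :
  0 < r -> measurable X ->
  (area (homothety2 r p q @^-1` X) = (r ^- 2)%:E * area X)%E.
Proof.
move=> r0 mX.
have r20 : 0 <= r ^+ 2 by rewrite sqr_ge0.
pose nu := pushforward_measure (mu \x mu)%E (measurable_homothety2 r p q).
rewrite /area [in RHS](product_measure_unique (m' := mscale (NngNum r20) nu)) //.
  change ((mu \x mu)%E (homothety2 r p q @^-1` X) =
    (r ^- 2)%:E * ((r ^+ 2)%:E * (mu \x mu)%E (homothety2 r p q @^-1` X)))%E.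
  by rewrite muleA -EFinM mulVf ?mul1e // expf_neq0 // gt_eqF.
move=> A B mA mB.
change ((r ^+ 2)%:E * (mu \x mu)%E (homothety2 r p q @^-1` (A `*` B)) = mu A * mu B)%E.
have -> : homothety2 r p q @^-1` (A `*` B) =
    (homothety r p.1 q.1 @^-1` A) `*` (homothety r p.2 q.2 @^-1` B) by [].
rewrite product_measure1E; last 2 first.
- by rewrite -[X in measurable X]setTI; exact: measurable_homothety.
- by rewrite -[X in measurable X]setTI; exact: measurable_homothety.
change ((r ^+ 2)%:E * (mu (homothety r p.1 q.1 @^-1` A) *
  mu (homothety r p.2 q.2 @^-1` B)) = mu A * mu B)%E.
rewrite !lebesgue_measure_homothety // muleACA -EFinM.
rewrite !muleA -EFinM (_ : r ^+ 2 * (r^-1 / r) = 1) ?mul1e //.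
by field; rewrite gt_eqF.
Qed.

End homothety.

Section area_of_squares.
Context {R : realType}.
Implicit Types (c v : R * R) (h t : R).

Lemma measurable_sqcoord c t :
  measurable_fun (T := (measurableTypeR R * measurableTypeR R)%type)
    (U := (measurableTypeR R * measurableTypeR R)%type) setT (sqcoord c t).
Proof.
have mx1 : measurable_fun setT (fun x : R * R => x.1 - c.1).
  exact: measurable_funB measurable_fst _.
have mx2 : measurable_fun setT (fun x : R * R => x.2 - c.2).
  exact: measurable_funB measurable_snd _.
by apply: measurable_fun_pair; [apply: measurable_funD | apply: measurable_funB];
  exact: measurable_funM.
Qed.

Lemma measurable_square c h t :
  measurable (square c h t : set (measurableTypeR R * measurableTypeR R)).
Proof.
rewrite squareE -[X in measurable X]setTI.
by apply: measurable_sqcoord => //; apply: measurableX; exact: measurable_itv.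
Qed.

Lemma homothety2_preimage_square v c h t (r : R) : 0 < r ->
  homothety2 r v c @^-1` square c (r * h) t = square v h t.
Proof.
move=> r0; have coordE y : sqcoord c t (homothety2 r v c y) =
    (r * (sqcoord v t y).1, r * (sqcoord v t y).2).
  by rewrite /sqcoord /homothety2 /homothety /=; congr (_, _); ring.
apply/seteqP; split => y /squareP.
  by rewrite coordE /= !normrM gtr0_norm // !ler_pM2l // => ?; apply/squareP.
by move=> ?; apply/squareP; rewrite coordE /= !normrM gtr0_norm // !ler_pM2l.
Qed.

Lemma area_square_scale v c h t (k : R) : 0 < k ->
  (area (square v (k * h) t) = (k ^+ 2)%:E * area (square c h t))%E.
Proof.
move=> k0; have k10 : 0 < k^-1 by rewrite invr_gt0.
rewrite -(homothety2_preimage_square v c (k * h) t _ k10) mulrA mulVf ?gt_eqF // mul1r.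
rewrite area_homothety2 //; last exact: measurable_square.
by rewrite exprVn invrK.
Qed.

Lemma square_axis c h :
  square c h 0 = `[c.1 - h, c.1 + h]%classic `*` `[c.2 - h, c.2 + h]%classic.
Proof.
have coordE (x : R * R) : sqcoord c 0 x = (x.1 - c.1, x.2 - c.2).
  by rewrite /sqcoord cos0 sin0; congr (_, _); ring.
apply/seteqP; split => x /=; rewrite !in_itv /=.
  by move=> /squareP; rewrite coordE /= !ler_distl.
by move=> [? ?]; apply/squareP; rewrite coordE /= !ler_distl.
Qed.

Lemma area_square_axis c h : 0 <= h -> area (square c h 0) = ((2 * h) ^+ 2)%:E.
Proof.
move=> h0; rewrite square_axis /area product_measure1E //.
change (lebesgue_measure `[(c.1 - h)%R, (c.1 + h)%R]%classic *
  lebesgue_measure `[(c.2 - h)%R, (c.2 + h)%R]%classic = ((2 * h) ^+ 2)%:E)%E.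
rewrite !lebesgue_measure_itv /= !lte_fin.
move: h0; rewrite le_eqVlt => /predU1P[<- | h0].
  by rewrite !subr0 !addr0 ltxx mul0e mulr0 expr0n.
have -> : c.1 - h < c.1 + h by lra.
have -> : c.2 - h < c.2 + h by lra.
by rewrite -EFinM; congr (_%:E); ring.
Qed.

Lemma normr_rot (u w t : R) : `|u * cos t + w * sin t| <= `|u| + `|w|.
Proof.
apply: le_trans (ler_normD _ _) _; rewrite !normrM.
by apply: lerD; rewrite -[leRHS]mulr1 ler_wpM2l // ?cos_max ?sin_max.
Qed.

Lemma square_axis_sub c h t : square c (h / 2) 0 `<=` square c h t.
Proof.
rewrite square_axis => x [/=]; rewrite !in_itv /= -!ler_distl => x1 x2.
apply/squareP; rewrite /sqcoord /=; split.
  by have := normr_rot (x.1 - c.1) (x.2 - c.2) t; lra.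
have := normr_rot (x.2 - c.2) (- (x.1 - c.1)) t.
by rewrite mulNr normrN; lra.
Qed.

Lemma square_sub_axis c h t : square c h t `<=` square c (2 * h) 0.
Proof.
move=> _ [a [b [ha [hb ->]]]]; rewrite square_axis /sqpt /= !in_itv /= -!ler_distl.
split.
  have -> : c.1 + a * cos t - b * sin t - c.1 = a * cos t + (- b) * sin t by ring.
  by have := normr_rot a (- b) t; rewrite normrN; lra.
have -> : c.2 + a * sin t + b * cos t - c.2 = b * cos t + a * sin t by ring.
by have := normr_rot b a t; lra.
Qed.

Lemma area_square_gt0 c h t : 0 < h -> (0 < area (square c h t))%E.
Proof.
move=> h0; apply: (lt_le_trans _ (le_area (square_axis_sub c h t))).
by rewrite area_square_axis ?lte_fin ?exprn_gt0 //; lra.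
Qed.

Lemma area_square_fin_num c h t : 0 <= h -> area (square c h t) \is a fin_num.
Proof.
move=> h0; rewrite ge0_fin_numE ?measure_ge0 //.
apply: le_lt_trans (le_area (square_sub_axis c h t)) _.
by rewrite area_square_axis ?ltry //; lra.
Qed.

Lemma area_square_ratio v c h t (s : R) : 0 < h -> 0 < s ->
  (area (square v (s * h) t) * (area (square c h t))^-1 = (s ^+ 2)%:E)%E.
Proof.
move=> h0 s0; rewrite (area_square_scale v c) //.
have := area_square_gt0 c h t h0.
rewrite -(fineK (area_square_fin_num c h t (ltW h0))) lte_fin => C0.
by rewrite inver gt_eqF // -!EFinM mulfK // gt_eqF.
Qed.

End area_of_squares.

Theorem lemma3p2 (R : realType) (c : R * R) (h t : R) (hpos : 0 < h) :
  ((15%:R^-1)%:E <=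
   area (square c h t `&` [set p | ((15%:R^-1)%:E <= fratio c h t p)%E])
     * (area (square c h t))^-1)%E.
Proof.
pose s : R := 4 / 15.
have s0 : 0 < s by rewrite /s; lra.
have s15 : ((15%:R^-1)%:E <= (s ^+ 2)%:E :> \bar R)%E by rewrite lee_fin /s; lra.
have invC_ge0 : (0 <= (area (square c h t))^-1)%E by rewrite inve_ge0 measure_ge0.
have small_sub : square c (s * h) t `<=`
    square c h t `&` [set p | ((15%:R^-1)%:E <= fratio c h t p)%E].
  move=> p Sp; split.
    by apply: le_square Sp; rewrite /s; lra.
  apply: (le_trans s15); rewrite -(area_square_ratio p c h t s hpos s0).
  apply: lee_wpmul2r => //; apply: le_area; apply: square_sub_Dreg Sp => //;
    rewrite /s; lra.
apply: (le_trans s15); rewrite -(area_square_ratio c c h t s hpos s0).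
exact: lee_wpmul2r (le_area small_sub).
Qed.
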